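(* Let $\mathbb{F}$ be a finite field of odd cardinality $q\ge 5$ and let $n\ge 1$. Then every matrix $A\in\mathbb{M}_n(\mathbb{F})$ can be written as $A=D+M$ where $D\in\mathbb{M}_n(\mathbb{F})$ is diagonalizable over $\mathbb{F}$ and $M\in\mathbb{M}_n(\mathbb{F})$ satisfies $M^2=0$. In particular $D^q=D$, so $A$ is the sum of a $q$-potent matrix and a square-zero matrix.
   Context: A matrix $X\in\mathbb{M}_n(\mathbb{F})$ is diagonalizable if there is an invertible $U\in\mathbb{M}_n(\mathbb{F})$ with $U^{-1}XU$ diagonal. A matrix $Z$ is $q$-potent if $Z^q=Z$; a matrix $M$ is square-zero if $M^2=0$. *)

From mathcomp Require Import all_boot all_order all_algebra all_field.
(* We use mathcomp's own [diagonalizable] from algebra/mxred.v: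
   diagonalizable A := exists2 P, P \in unitmx & is_diag_mx (P *m A *m invmx P). *)

From mathcomp Require Import all_boot all_order all_algebra all_field.
From mathcomp Require Import fingroup perm zify ring.

(* Induction on [n]: pick [v] whose cyclic space under [A] (or under [A^T], then
   transpose) is longest.  That cyclic space has an [A]-stable complement, namely the
   annihilator of a cyclic space of [A^T] of the same dimension, so [A] is similar to
   [diag(B, A')] with [B] in companion form, and it remains to split [B].
   Interleaving the basis of a companion matrix of even size [2m] gives
   [[0, 1], [X, T]] with [T] zero outside its last row.  Over a field with [q >= 5]
   elements and [2 != 0], [T = U + V] where [U, V] are block lower triangular with
   scalar diagonal blocks and their eigenvalues together with [0] are pairwise
   distinct; then [[0, 1], [-UV, U + V]] is annihilated by a product of distinct
   linear factors, hence satisfies [D^q = D], and differs from [[0, 1], [X, T]] by a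
   square-zero matrix.  Odd size adds one border row and column. *)

Set Implicit Arguments.
Unset Strict Implicit.
Unset Printing Implicit Defensive.
Import GRing.Theory.
Local Open Scope ring_scope.

Section SplitProduct.
Variable R : comNzRingType.

Definition mxprod_XsubC n (X : 'M[R]_n) (rs : seq R) := \prod_(r <- rs) (X - r%:M).

Lemma mxprod_XsubC_nil n (X : 'M[R]_n) : mxprod_XsubC X [::] = 1%:M.
Proof. by rewrite /mxprod_XsubC big_nil. Qed.

Lemma mxprod_XsubC_cons n (X : 'M[R]_n) r rs :
  mxprod_XsubC X (r :: rs) = (X - r%:M) *m mxprod_XsubC X rs.
Proof. by rewrite /mxprod_XsubC big_cons mulmxE. Qed.

Lemma mxprod_XsubC_cat n (X : 'M[R]_n) rs1 rs2 :
  mxprod_XsubC X (rs1 ++ rs2) = mxprod_XsubC X rs1 *m mxprod_XsubC X rs2.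
Proof. by rewrite /mxprod_XsubC big_cat mulmxE. Qed.

Lemma mxprod_XsubC_scalar n (c : R) : mxprod_XsubC (c%:M : 'M_n) [:: c] = 0.
Proof. by rewrite mxprod_XsubC_cons subrr mul0mx. Qed.

Lemma mxprod_XsubC_conj n (X S S' : 'M[R]_n) rs :
  S' *m S = 1%:M -> S *m S' = 1%:M ->
  mxprod_XsubC (S' *m X *m S) rs = S' *m mxprod_XsubC X rs *m S.
Proof.
move=> S'S SS'; elim: rs => [|r rs IH]; first by rewrite !mxprod_XsubC_nil mulmx1.
rewrite !mxprod_XsubC_cons IH.
have -> : S' *m X *m S - r%:M = S' *m (X - r%:M) *m S.
  by rewrite mulmxBr mulmxBl mul_mx_scalar -scalemxAl S'S scalemx1.
by rewrite !mulmxA -(mulmxA _ S S') SS' mulmx1.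
Qed.

Lemma mxprod_XsubC_block_lower m1 m2 (X1 : 'M[R]_m1) (X2 : 'M[R]_m2) C rs :
  exists Y, mxprod_XsubC (block_mx X1 0 C X2) rs
            = block_mx (mxprod_XsubC X1 rs) 0 Y (mxprod_XsubC X2 rs).
Proof.
elim: rs => [|r rs [Y IH]].
  by exists 0; rewrite !mxprod_XsubC_nil -scalar_mx_block.
rewrite !mxprod_XsubC_cons IH (scalar_mx_block m1 m2) opp_block_mx add_block_mx.
by rewrite mulmx_block !oppr0 !addr0 !mul0mx !mulmx0 !addr0 !add0r; eexists.
Qed.

(* The factors for [X2] must come first: [[_, 0], [_, 0]] *m [[0, 0], [_, _]] = 0,
   whereas the product in the other order need not vanish. *)
Lemma mxprod_XsubC_block_lower_eq0 m1 m2 (X1 : 'M[R]_m1) (X2 : 'M[R]_m2) C rs1 rs2 :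
  mxprod_XsubC X1 rs1 = 0 -> mxprod_XsubC X2 rs2 = 0 ->
  mxprod_XsubC (block_mx X1 0 C X2) (rs2 ++ rs1) = 0.
Proof.
move=> P1 P2; rewrite mxprod_XsubC_cat.
have [Y2 ->] := mxprod_XsubC_block_lower X1 X2 C rs2.
have [Y1 ->] := mxprod_XsubC_block_lower X1 X2 C rs1.
by rewrite P1 P2 mulmx_block !mulmx0 !mul0mx !addr0 block_mx0.
Qed.

End SplitProduct.

Lemma trmx_exp (R : comNzRingType) n (A : 'M[R]_n) k : (A ^+ k)^T = A^T ^+ k.
Proof.
elim: k => [|k IH]; first by rewrite !expr0 trmx1.
by rewrite exprS -mulmxE trmx_mul IH exprSr mulmxE.
Qed.

Lemma exists_notin (T : finType) (s : seq T) : (size s < #|T|)%N -> exists x, x \notin s.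
Proof.
move=> lt_s; case: (pickP (predC (mem s))) => [x /= Hx|H]; first by exists x.
suff : (#|T| <= size s)%N by rewrite leqNgt lt_s.
apply: leq_trans (card_size s); apply: subset_leq_card.
by apply/subsetP => x _; have := H x; rewrite /= => /negbFE.
Qed.

Section OddFiniteField.
Variable F : finFieldType.
Hypothesis F_odd : odd #|F|.

Lemma two_neq0_odd_card : (2%:R : F) != 0.
Proof.
apply/negP => /eqP two0.
have ch2 : (2%N \in [pchar F]) by rewrite inE /= two0 eqxx.
have := card_pprimeChar ch2; move: (logn _ _) => [|m] cardF.
  by have := finNzRing_gt1 F; rewrite (_ : #|F| = 1%N) //; exact: cardF.
by move: F_odd; rewrite (cardF : #|F| = (2 ^ m.+1)%N) expnS oddM.
Qed.

Lemma eq_oppr_odd_card (x : F) : x != 0 -> (x == - x) = false.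
Proof.
move=> x0; apply/negbTE/eqP => xN.
have : x *+ 2 = 0 by rewrite mulr2n {2}xN subrr.
by move/eqP; rewrite -mulr_natr mulf_eq0 (negbTE x0) (negbTE two_neq0_odd_card).
Qed.

End OddFiniteField.

Lemma mxprod_XsubC_expf_card (F : finFieldType) n (X : 'M[F]_n) (rs : seq F) :
  uniq rs -> mxprod_XsubC X rs = 0 -> X ^+ #|F| = X.
Proof.
case: n X => [|n] X urs P0; first by rewrite !flatmx0.
have rt : all (root ('X^#|F| - 'X)) rs.
  by apply/allP => r _; rewrite /root !hornerE expf_card subrr.
have ur : uniq_roots rs by rewrite uniq_rootsE.
have [g gE] := uniq_roots_prod_XsubC rt ur.
have := congr1 (horner_mx X) gE.
rewrite rmorphM /= rmorph_prod /=.
under eq_bigr do rewrite rmorphB /= horner_mx_X horner_mx_C.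
rewrite -/(mxprod_XsubC X rs) P0 mulr0 rmorphB rmorphXn /= horner_mx_X.
by move/eqP; rewrite subr_eq0 => /eqP.
Qed.

Section PotentSqzero.
Variable F : finFieldType.

Definition potent_sqzero n (A : 'M[F]_n) :=
  exists D M : 'M[F]_n, [/\ A = D + M, M *m M = 0 & D ^+ #|F| = D].

Lemma potent_sqzero_sim m n (A : 'M[F]_n) (X : 'M[F]_m) (P : 'M_(m, n)) (Q : 'M_(n, m)) :
  P *m Q = 1%:M -> Q *m P = 1%:M -> P *m A = X *m P ->
  potent_sqzero X -> potent_sqzero A.
Proof.
move=> PQ QP PA [D [M [XE MM DD]]].
have conj_exp k : (Q *m D *m P) ^+ k.+1 = Q *m D ^+ k.+1 *m P.
  elim: k => [|k IH]; first by rewrite !expr1.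
  by rewrite exprS IH -mulmxE !mulmxA -(mulmxA _ P Q) PQ mulmx1 -(mulmxA Q D) mulmxE -exprS.
exists (Q *m D *m P), (Q *m M *m P); split.
- by rewrite -mulmxDl -mulmxDr -XE -mulmxA -PA mulmxA QP mul1mx.
- by rewrite !mulmxA -(mulmxA _ P Q) PQ mulmx1 -(mulmxA _ M M) MM mulmx0 mul0mx.
have q_gt0 : (0 < #|F|)%N by apply/card_gt0P; exists 0.
by rewrite -(prednK q_gt0) conj_exp (prednK q_gt0) DD.
Qed.

Lemma potent_sqzero_block m1 m2 (A1 : 'M[F]_m1) (A2 : 'M[F]_m2) :
  potent_sqzero A1 -> potent_sqzero A2 -> potent_sqzero (block_mx A1 0 0 A2).
Proof.
move=> [D1 [M1 [-> M1M D1D]]] [D2 [M2 [-> M2M D2D]]].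
have block_exp k : (block_mx D1 0 0 D2) ^+ k = block_mx (D1 ^+ k) 0 0 (D2 ^+ k).
  elim: k => [|k IH]; first by rewrite !expr0 -scalar_mx_block.
  by rewrite !exprS IH -!mulmxE mulmx_block !mulmx0 !mul0mx !addr0 !add0r.
exists (block_mx D1 0 0 D2), (block_mx M1 0 0 M2); split.
- by rewrite add_block_mx !addr0.
- by rewrite mulmx_block M1M M2M !mulmx0 !mul0mx !addr0 block_mx0.
by rewrite block_exp D1D D2D.
Qed.

Lemma potent_sqzero_tr n (A : 'M[F]_n) : potent_sqzero A^T -> potent_sqzero A.
Proof.
move=> [D [M [AE MM DD]]]; exists D^T, M^T; split.
- by rewrite -[A]trmxK AE linearD.
- by rewrite -trmx_mul MM trmx0.
by rewrite -trmx_exp DD.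
Qed.

Lemma potent_sqzero_perm n (A X : 'M[F]_n) (s : 'S_n) :
  (forall i j, X i j = A (s i) (s j)) -> potent_sqzero X -> potent_sqzero A.
Proof.
move=> XE; apply: (@potent_sqzero_sim _ _ A X (perm_mx s) (perm_mx s^-1)).
- by rewrite -perm_mxM mulgV perm_mx1.
- by rewrite -perm_mxM mulVg perm_mx1.
have -> : X = perm_mx s *m A *m perm_mx s^-1.
  by rewrite -row_permE -col_permE; apply/matrixP => i j; rewrite !mxE XE.
by rewrite -mulmxA -perm_mxM mulVg perm_mx1 mulmx1.
Qed.

Lemma potent_sqzero_flat (A : 'M[F]_0) : potent_sqzero A.
Proof. by exists 0, 0; split; rewrite ?flatmx0. Qed.

Lemma potent_sqzero_mx11 (A : 'M[F]_1) : potent_sqzero A.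
Proof.
exists A, 0; split; rewrite ?addr0 ?mulmx0 //.
apply: (@mxprod_XsubC_expf_card _ _ _ [:: A 0 0]) => //.
by rewrite {1}[A]mx11_scalar mxprod_XsubC_scalar.
Qed.

End PotentSqzero.

Section LastRowSplit.
Variable F : finFieldType.
Hypothesis F_odd : odd #|F|.
Hypothesis F_ge5 : (5 <= #|F|)%N.
Variable k : nat.
Implicit Types (t : 'M[F]_(1, k)) (tau : F).

Let eq_opp := eq_oppr_odd_card F_odd.

Lemma last_row_split0 t :
  exists (U V : 'M[F]_(k + 1)) rs1 rs2,
    [/\ U + V = block_mx 0 0 t 0, mxprod_XsubC U rs1 = 0, mxprod_XsubC V rs2 = 0
      & uniq (0 :: rs2 ++ rs1)].
Proof.
have [a] : exists a : F, a \notin [:: 0; 1; -1].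
  by apply: exists_notin; rewrite /= (leq_trans _ F_ge5).
rewrite !inE !negb_or => /and3P[a0 a1 aN1].
exists (block_mx 1%:M 0 t a%:M), (block_mx (-1)%:M 0 0 (-a)%:M), [:: a; 1], [:: -a; -1].
split.
- by rewrite add_block_mx !addr0 -!raddfD /= !subrr !raddf0.
- by apply: (@mxprod_XsubC_block_lower_eq0 _ _ _ _ _ _ [:: 1] [:: a]);
    rewrite mxprod_XsubC_scalar.
- by apply: (@mxprod_XsubC_block_lower_eq0 _ _ _ _ _ _ [:: -1] [:: -a]);
    rewrite mxprod_XsubC_scalar.
rewrite /= !inE !negb_or !(eq_sym 0) !oppr_eq0 oner_eq0 a0 /= eqr_opp a1 /=.
rewrite (eq_sym (-a) a) eq_opp // eqr_oppLR aN1 (eq_sym (-1) a) aN1 /=.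
by rewrite (eq_sym (-1) 1) eq_opp ?oner_eq0 // a1.
Qed.

(* [U] has eigenvalues [a] and [tau + a], [V] has [-a]; avoiding [0], [-tau] and
   [-tau/2] keeps [0, -a, tau + a, a] pairwise distinct. *)
Lemma last_row_split_neq0 t tau : tau != 0 ->
  exists (U V : 'M[F]_(k + 1)) rs1 rs2,
    [/\ U + V = block_mx 0 0 t tau%:M, mxprod_XsubC U rs1 = 0,
        mxprod_XsubC V rs2 = 0 & uniq (0 :: rs2 ++ rs1)].
Proof.
move=> tau0; have [a] : exists a : F, a \notin [:: 0; -tau; -(tau / 2%:R)].
  by apply: exists_notin; rewrite /= (leq_trans _ F_ge5).
rewrite !inE !negb_or => /and3P[a0 atau atau2].
exists (block_mx a%:M 0 t (tau + a)%:M), (-a)%:M, [:: tau + a; a], [:: -a]; split.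
- by rewrite (scalar_mx_block k 1) add_block_mx !addr0 -!raddfD /= addrN addrK raddf0.
- by apply: (@mxprod_XsubC_block_lower_eq0 _ _ _ _ _ _ [:: a] [:: tau + a]);
    rewrite mxprod_XsubC_scalar.
- by rewrite mxprod_XsubC_scalar.
rewrite /= !inE !negb_or !(eq_sym 0) oppr_eq0 a0 /= !andbT.
apply/and3P; split.
- by apply: contra atau => /eqP aE; rewrite -[a](addKr tau) aE addr0.
- apply/andP; split; last by rewrite (eq_sym (-a) a) eq_opp.
  apply: contra atau2 => /eqP aE; apply/eqP.
  have -> : tau = (tau + a) - a by rewrite addrK.
  by rewrite -aE; field; exact: two_neq0_odd_card.
- by apply: contra tau0 => /eqP aE; rewrite -(addrK a tau) aE subrr.
Qed.

Lemma last_row_split t tau :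
  exists (U V : 'M[F]_(k + 1)) rs1 rs2,
    [/\ U + V = block_mx 0 0 t tau%:M, mxprod_XsubC U rs1 = 0,
        mxprod_XsubC V rs2 = 0 & uniq (0 :: rs2 ++ rs1)].
Proof.
have [->|] := eqVneq tau 0; last exact: last_row_split_neq0.
by rewrite raddf0; exact: last_row_split0.
Qed.

End LastRowSplit.

Section InterleavedCompanion.
Variable F : finFieldType.
Hypothesis F_odd : odd #|F|.
Hypothesis F_ge5 : (5 <= #|F|)%N.
Variable k : nat.

Definition even_companion_form (X : 'M[F]_(k + 1)) (t : 'M_(1, k)) (tau : F) :
  'M[F]_((k + 1) + (k + 1)) := block_mx 0 1%:M X (block_mx 0 0 t tau%:M).

(* Writing the lower-right block as [U + V], [D := [[0, 1], [-UV, U + V]]] is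
   conjugate to [[U, 0], [1, V]], and the remainder [[0, 0], [X + UV, 0]] squares
   to zero. *)
Lemma even_companion_split X t tau :
  exists (D M : 'M[F]_((k + 1) + (k + 1))) rs,
  [/\ even_companion_form X t tau = D + M, (exists N, M = block_mx 0 0 N 0),
      mxprod_XsubC D rs = 0 & uniq (0 :: rs)].
Proof.
have [U [V [rs1 [rs2 [UV pU pV urs]]]]] := last_row_split F_odd F_ge5 t tau.
exists (block_mx 0 1%:M (- (U *m V)) (U + V)), (block_mx 0 0 (X + U *m V) 0).
exists (rs2 ++ rs1); split.
- by rewrite /even_companion_form add_block_mx !addr0 UV (addrC X) addKr.
- by eexists.
- pose S := block_mx (-V) 1%:M 1%:M 0 : 'M_((k + 1) + (k + 1)).
  pose S' := block_mx 0 1%:M 1%:M V : 'M_((k + 1) + (k + 1)).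
  have S'S : S' *m S = 1%:M.
    rewrite mulmx_block !mulmx0 !mul0mx !mul1mx !mulmx1 add0r addr0 addNr.
    by rewrite addr0 -scalar_mx_block.
  have SS' : S *m S' = 1%:M.
    rewrite mulmx_block !mulmx0 !mul0mx !mul1mx !mulmx1 add0r !addr0 addNr.
    by rewrite -scalar_mx_block.
  have -> : block_mx 0 1%:M (- (U *m V)) (U + V) = S' *m block_mx U 0 1%:M V *m S.
    rewrite !mulmx_block !mulmx0 !mul0mx !mul1mx !mulmx1 !addr0 !add0r.
    by rewrite mul1mx addNr mulmxN mulmxDl opprD addrNK.
  by rewrite mxprod_XsubC_conj // (mxprod_XsubC_block_lower_eq0 _ pU pV) mulmx0 mul0mx.
- by move: urs; rewrite /= mem_cat uniq_catC cat_uniq.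
Qed.

Lemma potent_sqzero_even_companion X t tau :
  potent_sqzero (even_companion_form X t tau).
Proof.
have [D [M [rs [XE [N ME] pD urs]]]] := even_companion_split X t tau.
exists D, M; split => //.
- by rewrite ME mulmx_block !mulmx0 !mul0mx !addr0 block_mx0.
- by apply: (mxprod_XsubC_expf_card (rs := rs)) => //; case/andP: urs.
Qed.

Lemma potent_sqzero_odd_companion X t tau (u : 'M[F]_(1, k + 1))
    (w : 'M[F]_((k + 1) + (k + 1), 1)) :
  potent_sqzero (block_mx (0 : 'M_1) (row_mx u 0) w (even_companion_form X t tau)).
Proof.
have [D [M [rs [XE [N ME] pD urs]]]] := even_companion_split X t tau.
exists (block_mx 0 0 w D), (block_mx 0 (row_mx u 0) 0 M); split.
- by rewrite add_block_mx XE !addr0 add0r.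
- rewrite ME mulmx_block !mulmx0 !mul0mx !addr0 !add0r mul_row_block.
  by rewrite !mulmx0 !mul0mx !addr0 row_mx0 mulmx_block !mulmx0 !mul0mx !addr0 !block_mx0.
- apply: (mxprod_XsubC_expf_card (rs := rcons rs 0)).
    by rewrite rcons_uniq; move: urs => /= /andP[-> ->].
  rewrite -cats1 mxprod_XsubC_cat.
  have [Y ->] := mxprod_XsubC_block_lower 0 D w rs.
  rewrite pD mxprod_XsubC_cons mxprod_XsubC_nil mulmx1 raddf0 subr0.
  by rewrite mulmx_block !mulmx0 !mul0mx !addr0 block_mx0.
Qed.

End InterleavedCompanion.

Definition is_companion (R : nzRingType) d (B : 'M[R]_d) :=
  forall i j : 'I_d, (i.+1 < d)%N -> B i j = (j == i.+1 :> nat)%:R.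

Lemma perm_of_inj_nat N (g : nat -> nat) : (forall i, (i < N)%N -> (g i < N)%N) ->
  (forall i j, (i < N)%N -> (j < N)%N -> g i = g j -> i = j) ->
  {s : 'S_N | forall i, val (s i) = g i}.
Proof.
move=> gN g_inj.
pose f (i : 'I_N) : 'I_N := Ordinal (gN i (ltn_ord i)).
have f_inj : injective f by move=> i j /(congr1 val) /= /g_inj E; apply/val_inj/E.
by exists (perm f_inj) => i; rewrite permE.
Qed.

Lemma pos_nat_parity_cases d : (0 < d)%N ->
  [\/ d = 1%N, exists k, d = ((k + 1) + (k + 1))%N
    | exists k, d = (1 + ((k + 1) + (k + 1)))%N].
Proof.
move=> d_gt0; have := odd_double_half d; rewrite -addnn.
case: (odd d) => /= dE; last by apply: Or32; exists (d./2 - 1)%N; lia.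
have [d2_0|d2_gt0] := posnP d./2; first by apply: Or31; lia.
by apply: Or33; exists (d./2 - 1)%N; lia.
Qed.

Section Companion.
Variable F : finFieldType.
Hypothesis F_odd : odd #|F|.
Hypothesis F_ge5 : (5 <= #|F|)%N.

Lemma even_companion_formP k (Y : 'M[F]_((k + 1) + (k + 1))) :
  (forall i j, Y (lshift _ i) (lshift _ j) = 0) ->
  (forall i j, Y (lshift _ i) (rshift _ j) = (i == j)%:R) ->
  (forall (i : 'I_k) j, Y (rshift _ (lshift 1 i)) (rshift _ j) = 0) ->
  exists X t tau, Y = even_companion_form X t tau.
Proof.
move=> Y11 Y12 Y22.
exists (dlsubmx Y), (dlsubmx (drsubmx Y)), (drsubmx (drsubmx Y) 0 0).
rewrite /even_companion_form -[Y in LHS]submxK -[drsubmx Y in LHS]submxK -mx11_scalar.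
congr block_mx.
- by apply/matrixP => i j; rewrite !mxE Y11.
- by apply/matrixP => i j; rewrite !mxE Y12.
by congr block_mx; apply/matrixP => i j; rewrite !mxE Y22.
Qed.

(* Listing the even-indexed basis vectors before the odd-indexed ones turns the
   shift [e_i |-> e_(i+1)] into [even_companion_form]. *)
Lemma potent_sqzero_companion_even k (B : 'M[F]_((k + 1) + (k + 1))) :
  is_companion B -> potent_sqzero B.
Proof.
move=> cB.
pose g i := if (i < k + 1)%N then (i + i)%N else ((i - (k + 1)) + (i - (k + 1)) + 1)%N.
have [s sE] : {s : 'S_((k + 1) + (k + 1)) | forall i, val (s i) = g i}.
  apply: perm_of_inj_nat => [i lt|i j hi hj]; rewrite /g.
    by case: (ltnP i (k + 1)) => ?; lia.
  by case: (ltnP i (k + 1)) => ?; case: (ltnP j (k + 1)) => ?; lia.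
have sL (i : 'I_(k + 1)) : val (s (lshift (k + 1) i)) = (i + i)%N.
  by rewrite sE /g /= ltn_ord.
have sR (i : 'I_(k + 1)) : val (s (rshift (k + 1) i)) = (i + i + 1)%N.
  by rewrite sE /g /= ltnNge leq_addr /= addKn.
pose X := \matrix_(i, j) B (s i) (s j).
apply: (potent_sqzero_perm (s := s) (X := X)); first by move=> i j; rewrite mxE.
have [Xl [t [tau ->]]] : exists Xl t tau, X = even_companion_form Xl t tau.
  apply: even_companion_formP => [i j|i j|i j]; rewrite mxE cB ?sL ?sR.
  - by case: eqP => // h; exfalso; lia.
  - by have := ltn_ord i; lia.
  - congr (_%:R); congr (nat_of_bool _); apply/idP/idP => /eqP h; apply/eqP.
      by apply/val_inj => /=; lia.
    by rewrite h; lia.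
  - by have := ltn_ord i; lia.
  - by rewrite /=; case: eqP => // h; exfalso; lia.
  - by rewrite /=; have := ltn_ord i; lia.
exact: potent_sqzero_even_companion.
Qed.

Lemma potent_sqzero_companion_odd k (B : 'M[F]_(1 + ((k + 1) + (k + 1)))) :
  is_companion B -> potent_sqzero B.
Proof.
move=> cB.
pose g i := if i == 0%N then 0%N else if (i - 1 < k + 1)%N then ((i - 1) + (i - 1) + 1)%N
   else ((i - 1 - (k + 1)) + (i - 1 - (k + 1)) + 2)%N.
have [s sE] : {s : 'S_(1 + ((k + 1) + (k + 1))) | forall i, val (s i) = g i}.
  apply: perm_of_inj_nat => [i lt|i j hi hj]; rewrite /g.
    by case: eqP => ?; [lia|case: (ltnP (i - 1) (k + 1)) => ?; lia].
  case: eqP => ?; case: eqP => ?; try lia;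
  by case: (ltnP (i - 1) (k + 1)) => ?; case: (ltnP (j - 1) (k + 1)) => ?; lia.
have s0 : val (s (lshift _ (0 : 'I_1))) = 0%N by rewrite sE.
have sL (i : 'I_(k + 1)) : val (s (rshift 1 (lshift (k + 1) i))) = (i + i + 1)%N.
  by rewrite sE /g /= add1n subn1 /= ltn_ord.
have sR (i : 'I_(k + 1)) : val (s (rshift 1 (rshift (k + 1) i))) = (i + i + 2)%N.
  by rewrite sE /g /= add1n subn1 /= ltnNge leq_addr /= addKn.
pose X := \matrix_(i, j) B (s i) (s j).
apply: (potent_sqzero_perm (s := s) (X := X)); first by move=> i j; rewrite mxE.
have [Xl [t [tau XE]]] : exists Xl t tau, drsubmx X = even_companion_form Xl t tau.
  apply: even_companion_formP => [i j|i j|i j]; rewrite !mxE cB ?sL ?sR.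
  - by case: eqP => // h; exfalso; lia.
  - by have := ltn_ord i; lia.
  - congr (_%:R); congr (nat_of_bool _); apply/idP/idP => /eqP h; apply/eqP.
      by apply/val_inj => /=; lia.
    by rewrite h; lia.
  - by have := ltn_ord i; lia.
  - by rewrite /=; case: eqP => // h; exfalso; lia.
  - by rewrite /=; have := ltn_ord i; lia.
have X11 : ulsubmx X = 0.
  by apply/matrixP => i j; rewrite !mxE (ord1 i) (ord1 j) cB s0 //; lia.
have X12r : rsubmx (ursubmx X) = 0.
  apply/matrixP => i j; rewrite !mxE (ord1 i) cB ?s0 ?sR //; last by lia.
  by case: eqP => // h; exfalso; lia.
rewrite -[X]submxK X11 -[ursubmx X]hsubmxK X12r XE.
exact: potent_sqzero_odd_companion.
Qed.

Lemma potent_sqzero_companion d (B : 'M[F]_d) :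
  (0 < d)%N -> is_companion B -> potent_sqzero B.
Proof.
move=> /pos_nat_parity_cases[|[k]|[k]] dE; subst d.
- by move=> _; exact: potent_sqzero_mx11.
- exact: potent_sqzero_companion_even.
- exact: potent_sqzero_companion_odd.
Qed.

End Companion.

Section Krylov.
Variables (F : fieldType) (n : nat).
Implicit Types (A : 'M[F]_n) (v : 'rV[F]_n).

Definition krylov_vec A v i := v *m A ^+ i.
Definition krylov_space A v m := (\sum_(i < m) <<krylov_vec A v i>>)%MS.

Lemma krylov_vecS A v i : krylov_vec A v i.+1 = krylov_vec A v i *m A.
Proof. by rewrite /krylov_vec -mulmxA mulmxE -exprSr. Qed.

Lemma krylov_spaceS A v m :
  krylov_space A v m.+1 = (krylov_space A v m + <<krylov_vec A v m>>)%MS.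
Proof. by rewrite /krylov_space big_ord_recr. Qed.

Lemma mxrank_adds_notin m (S : 'M[F]_(m, n)) (x : 'rV[F]_n) :
  ~~ (x <= S)%MS -> \rank (S + <<x>>)%MS = (\rank S).+1.
Proof.
move=> xS; apply/eqP; rewrite eqn_leq; apply/andP; split.
  apply: leq_trans (mxrank_adds_leqif _ _) _.
  by rewrite genmxE -[(\rank S).+1]addn1 leq_add2l rank_leq_row.
have : (S < S + <<x>>)%MS by rewrite ltmxE addsmxSl /= addsmx_sub submx_refl /= genmxE.
by rewrite ltmxErank => /andP[_].
Qed.

Lemma rank_krylov_space A v m :
  (forall i, (i < m)%N -> ~~ (krylov_vec A v i <= krylov_space A v i)%MS) ->
  \rank (krylov_space A v m) = m.
Proof.
elim: m => [|m IH] free; first by rewrite /krylov_space big_ord0 mxrank0.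
rewrite krylov_spaceS mxrank_adds_notin ?IH //; last exact: free.
by move=> i lti; apply: free; rewrite ltnW.
Qed.

Lemma exists_krylov_dep A v : exists m, (krylov_vec A v m <= krylov_space A v m)%MS.
Proof.
case: (boolP [exists m : 'I_n.+1, (krylov_vec A v m <= krylov_space A v m)%MS]).
  by case/existsP => m dep; exists m.
move/existsPn => indep; have := rank_leq_col (krylov_space A v n.+1).
rewrite rank_krylov_space ?ltnn // => i lti; exact: (indep (Ordinal lti)).
Qed.

Definition krylov_dim A v := ex_minn (exists_krylov_dep A v).

Lemma krylov_dimP A v :
  (krylov_vec A v (krylov_dim A v) <= krylov_space A v (krylov_dim A v))%MS.
Proof. by rewrite /krylov_dim; case: ex_minnP. Qed.

Lemma krylov_dim_min A v m :
  (krylov_vec A v m <= krylov_space A v m)%MS -> (krylov_dim A v <= m)%N.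
Proof. by rewrite /krylov_dim; case: ex_minnP => l _ H /H. Qed.

Lemma rank_krylov_dim A v : \rank (krylov_space A v (krylov_dim A v)) = krylov_dim A v.
Proof.
by apply: rank_krylov_space => i lti; apply/negP => /krylov_dim_min; rewrite leqNgt lti.
Qed.

Lemma krylov_dim_leq A v : (krylov_dim A v <= n)%N.
Proof. by rewrite -(rank_krylov_dim A v) rank_leq_col. Qed.

Lemma krylov_dim_gt0 A v : v != 0 -> (0 < krylov_dim A v)%N.
Proof.
move=> v0; rewrite lt0n; apply: contra v0 => /eqP d0.
have := krylov_dimP A v.
by rewrite d0 /krylov_space big_ord0 /krylov_vec expr0 mulmx1 submx0.
Qed.

Lemma krylov_vec_sub_lt A v i : (i < krylov_dim A v)%N ->
  (krylov_vec A v i <= krylov_space A v (krylov_dim A v))%MS.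
Proof. by move=> lti; apply: (sumsmx_sup (Ordinal lti)); rewrite ?genmxE. Qed.

Lemma krylov_space_stable A v :
  (krylov_space A v (krylov_dim A v) *m A <= krylov_space A v (krylov_dim A v))%MS.
Proof.
rewrite /krylov_space sumsmxMr; apply/sumsmx_subP => i _.
rewrite (eqmxMr A (genmxE _)) -krylov_vecS.
have [lt|] := ltnP i.+1 (krylov_dim A v); first exact: krylov_vec_sub_lt.
move=> ge; have -> : i.+1 = krylov_dim A v by apply/eqP; rewrite eqn_leq ge ltn_ord.
exact: krylov_dimP.
Qed.

Lemma krylov_vec_sub A v j :
  (krylov_vec A v j <= krylov_space A v (krylov_dim A v))%MS.
Proof.
elim: j => [|j IH].
  have [d0|] := posnP (krylov_dim A v); last exact: krylov_vec_sub_lt.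
  by have := krylov_dimP A v; rewrite d0.
by rewrite krylov_vecS; apply: submx_trans (krylov_space_stable A v); rewrite submxMr.
Qed.

Definition krylov_basis A v := \matrix_(i < krylov_dim A v) krylov_vec A v i.

Lemma eqmx_krylov_basis A v :
  (krylov_basis A v :=: krylov_space A v (krylov_dim A v))%MS.
Proof.
apply/eqmxP/andP; split.
  by apply/row_subP => i; rewrite rowK; apply: krylov_vec_sub_lt.
apply/sumsmx_subP => i _; rewrite genmxE.
by rewrite -(rowK (fun i => krylov_vec A v i)) row_sub.
Qed.

Lemma row_free_krylov_basis A v : row_free (krylov_basis A v).
Proof. by rewrite /row_free eqmx_krylov_basis rank_krylov_dim. Qed.

End Krylov.

Lemma stable_col_mx_block (F : fieldType) m1 m2 n (A : 'M[F]_n)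
    (K : 'M_(m1, n)) (W : 'M_(m2, n)) (Q : 'M_(n, m1 + m2)) :
  col_mx K W *m Q = 1%:M -> (K *m A <= K)%MS -> (W *m A <= W)%MS ->
  col_mx K W *m A
    = block_mx (K *m A *m lsubmx Q) 0 0 (W *m A *m rsubmx Q) *m col_mx K W.
Proof.
move=> PQ /submxP[Y1 KA] /submxP[Y2 WA].
have [KQ1 KQ2 WQ1 WQ2] : [/\ K *m lsubmx Q = 1%:M, K *m rsubmx Q = 0,
    W *m lsubmx Q = 0 & W *m rsubmx Q = 1%:M].
  have QE : Q = row_mx (lsubmx Q) (rsubmx Q) by rewrite hsubmxK.
  by move: PQ; rewrite {1}QE mul_col_row scalar_mx_block => /eq_block_mx.
rewrite mul_col_mx mul_block_col !mul0mx addr0 add0r KA WA.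
by rewrite -!(mulmxA Y1) -!(mulmxA Y2) !mulmxA -(mulmxA Y1) KQ1 -(mulmxA Y2) WQ2 !mulmx1.
Qed.

Section CyclicComplement.
Variables (F : fieldType) (n : nat) (A : 'M[F]_n) (v : 'rV[F]_n).
Hypothesis v_neq0 : v != 0.

Let d := krylov_dim A v.
Let d_gt0 : (0 < d)%N := krylov_dim_gt0 A v_neq0.
Let last_lt_d : (d.-1 < d)%N. Proof. by rewrite ltn_predL. Qed.
Let last_ord : 'I_d := Ordinal last_lt_d.

Lemma exists_krylov_dual : exists c : 'cV[F]_n,
  forall i : 'I_d, (krylov_vec A v i *m c) 0 0 = (i == last_ord)%:R.
Proof.
have [R KR] := row_freeP (row_free_krylov_basis A v).
exists (R *m delta_mx last_ord 0) => i.
have := congr1 (fun M : 'cV_d => M i 0) (congr1 (mulmx^~ (delta_mx last_ord (0 : 'I_1))) KR).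
rewrite mul1mx -mulmxA [in RHS]mxE eqxx andbT => <-; rewrite !mxE.
by apply: eq_bigr => k _; rewrite /krylov_basis mxE.
Qed.

Section Dual.
Variable c : 'cV[F]_n.
Hypothesis c_dual : forall i : 'I_d, (krylov_vec A v i *m c) 0 0 = (i == last_ord)%:R.

Let S := krylov_space A^T c^T (krylov_dim A^T c^T).
(* The rows orthogonal to every [A ^+ j *m c]. *)
Let W := kermx S^T.

Lemma annihilator_rank :
  (forall x, (krylov_dim A^T x <= d)%N) -> (n - d <= \rank W)%N.
Proof. by move=> v_max; rewrite mxrank_ker mxrank_tr rank_krylov_dim leq_sub2l. Qed.

Lemma annihilator_stable : (W *m A <= W)%MS.
Proof.
have [Y YE] := submxP (krylov_space_stable A^T c^T).
apply/sub_kermxP; rewrite -mulmxA.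
have -> : A *m S^T = (Y *m S)^T by rewrite -YE trmx_mul trmxK.
by rewrite trmx_mul mulmxA mulmx_ker mul0mx.
Qed.

Lemma annihilator_orth (z : 'rV[F]_n) j : (z <= W)%MS -> z *m (A ^+ j *m c) = 0.
Proof.
move/sub_kermxP => zW; have [y yE] := submxP (krylov_vec_sub A^T c^T j).
have -> : A ^+ j *m c = (y *m S)^T.
  by rewrite -yE /krylov_vec trmx_mul -trmx_exp !trmxK.
by rewrite trmx_mul mulmxA zW mul0mx.
Qed.

Let h m := (v *m A ^+ m *m c) 0 0.

Lemma krylov_annihilator_pairing (y : 'rV[F]_d) i :
  (y *m krylov_basis A v *m (A ^+ i *m c)) 0 0 = \sum_(j < d) y 0 j * h (j + i)%N.
Proof.
rewrite -mulmxA mxE; apply: eq_bigr => j _; congr (_ * _).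
have -> : (krylov_basis A v *m (A ^+ i *m c)) j 0
    = (row j (krylov_basis A v) *m (A ^+ i *m c)) 0 0 by rewrite -row_mul !mxE.
by rewrite rowK /krylov_vec /h exprD !mulmxA.
Qed.

(* Pairing [y *m krylov_basis A v] against [A ^+ i *m c] gives a Hankel system in [y]
   which is triangular with unit antidiagonal, since [h m = (m == d.-1)] for [m < d]. *)
Lemma krylov_annihilator_cap (z : 'rV[F]_n) :
  (z <= krylov_basis A v)%MS -> (z <= W)%MS -> z = 0.
Proof.
move=> zK zW; have [y zE] := submxP zK.
have h_lt m : (m < d)%N -> h m = (m == d.-1)%:R.
  by move=> lt; have := c_dual (Ordinal lt); rewrite /krylov_vec.
have hankel i : \sum_(j < d) y 0 j * h (j + i)%N = 0.
  by rewrite -krylov_annihilator_pairing -zE annihilator_orth // mxE.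
have y_high i : forall j : 'I_d, (d.-1 < j + i)%N -> y 0 j = 0.
  elim: i => [|i IHi] j.
    by rewrite addn0 ltnNge -ltnS prednK ?ltn_ord.
  have [lt _|ge lt] := ltnP d.-1 (j + i)%N; first exact: IHi.
  have ji : (j + i = d.-1)%N by apply/eqP; rewrite eqn_leq ge -ltnS -addnS lt.
  have := hankel i; rewrite (bigD1 j) //= ji h_lt // eqxx mulr1.
  rewrite big1 ?addr0 // => j' nj'.
  have [lt'|ge'] := ltnP d.-1 (j' + i)%N; first by rewrite IHi ?mul0r.
  rewrite h_lt; last exact: leq_ltn_trans ge' last_lt_d.
  case: eqP => [e|]; last by rewrite mulr0.
  suff E : j' = j by move: nj'; rewrite E eqxx.
  by apply/val_inj/eqP; rewrite -(eqn_add2r i) ji e.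
rewrite zE (_ : y = 0) ?mul0mx //; apply/matrixP => i j.
by rewrite (ord1 i) mxE; apply: (y_high d); apply: leq_trans (leq_addl j d).
Qed.

Lemma krylov_annihilator_basis : (forall x, (krylov_dim A^T x <= d)%N) ->
  exists Q : 'M_(n, d + \rank W),
    [/\ col_mx (krylov_basis A v) (row_base W) *m Q = 1%:M,
        Q *m col_mx (krylov_basis A v) (row_base W) = 1%:M & (\rank W < n)%N].
Proof.
move=> v_max; set P := col_mx _ _.
have cap0 : (krylov_basis A v :&: row_base W)%MS = 0.
  apply/row_matrixP => i; rewrite row0; apply: krylov_annihilator_cap.
  - exact: submx_trans (row_sub _ _) (capmxSl _ _).
  - by rewrite -(eq_row_base W); exact: submx_trans (row_sub _ _) (capmxSr _ _).
have rankK : \rank (krylov_basis A v) = d by apply/eqP; exact: row_free_krylov_basis.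
have rankP : \rank P = (d + \rank W)%N.
  by rewrite /P -addsmxE mxrank_disjoint_sum // rankK eq_row_base.
have dW : (d + \rank W = n)%N.
  apply/eqP; rewrite eqn_leq -{1}rankP rank_leq_col /=.
  apply: leq_trans (leq_add (leqnn d) (annihilator_rank v_max)).
  by rewrite subnKC // krylov_dim_leq.
have [Q PQ] := row_freeP (introT eqP rankP : row_free P).
have [Q' Q'P] := row_fullP (introT eqP (etrans rankP dW) : row_full P).
have QQ' : Q' = Q by rewrite -[Q']mulmx1 -PQ mulmxA Q'P mul1mx.
exists Q; split => //; first by rewrite -QQ'.
by rewrite -[X in (_ < X)%N]dW -[X in (X < _)%N]add0n ltn_add2r.
Qed.

End Dual.
Hypothesis v_max : forall x, (krylov_dim A^T x <= d)%N.

Lemma cyclic_block_decomposition :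
  exists m (P : 'M[F]_(d + m, n)) (Q : 'M[F]_(n, d + m)) (B : 'M[F]_d) (A' : 'M[F]_m),
    [/\ P *m Q = 1%:M, Q *m P = 1%:M, P *m A = block_mx B 0 0 A' *m P,
        is_companion B & (m < n)%N].
Proof.
have [c c_dual] := exists_krylov_dual.
have [Q [PQ QP rankW]] := krylov_annihilator_basis c_dual v_max.
set K := krylov_basis A v in PQ QP *; set Wb := row_base _ in PQ QP *.
exists _, (col_mx K Wb), Q, (K *m A *m lsubmx Q), (Wb *m A *m rsubmx Q); split => //.
- apply: stable_col_mx_block => //.
    by rewrite /K (eqmxMr A (eqmx_krylov_basis A v)) eqmx_krylov_basis krylov_space_stable.
  by rewrite /Wb (eqmxMr A (eq_row_base _)) eq_row_base annihilator_stable.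
move=> i j lt; have KQ1 : K *m lsubmx Q = 1%:M.
  by move: PQ; rewrite -[X in _ *m X]hsubmxK mul_col_row scalar_mx_block => /eq_block_mx[].
have -> : (K *m A *m lsubmx Q) i j = row i (K *m A *m lsubmx Q) 0 j by rewrite [RHS]mxE.
rewrite !row_mul rowK -krylov_vecS -(rowK (fun i => krylov_vec A v i) (Ordinal lt)).
by rewrite -/(krylov_basis A v) -row_mul KQ1 !mxE eq_sym.
Qed.

End CyclicComplement.

Lemma krylov_dim0 (F : fieldType) n (A : 'M[F]_n) : krylov_dim A 0 = 0%N.
Proof.
by apply/eqP; rewrite -leqn0; apply: krylov_dim_min; rewrite /krylov_vec mul0mx sub0mx.
Qed.

Lemma exists_max_krylov_dim (F : finFieldType) n (A : 'M[F]_n.+1) :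
  exists2 v : 'rV_n.+1, v != 0 &
    (forall x, krylov_dim A^T x <= krylov_dim A v)%N \/
    (forall x, krylov_dim A x <= krylov_dim A^T v)%N.
Proof.
pose f x := maxn (krylov_dim A x) (krylov_dim A^T x).
have [v fv] : {v | \max_x f x = f v} by apply: eq_bigmax; apply/card_gt0P; exists 0.
have f_max x : (f x <= f v)%N by rewrite -fv leq_bigmax.
exists v.
  pose e : 'rV[F]_n.+1 := delta_mx 0 0.
  have : (0 < f e)%N.
    apply: leq_trans (leq_maxl _ _); apply: krylov_dim_gt0.
    by apply/eqP => /matrixP /(_ 0 0); rewrite !mxE eqxx => /eqP; rewrite oner_eq0.
  apply: contraTneq => v0; rewrite -leqNgt.
  by apply: leq_trans (f_max e) _; rewrite v0 /f !krylov_dim0.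
have [le|lt] := leqP (krylov_dim A^T v) (krylov_dim A v); [left|right] => x.
  by have := f_max x; rewrite /f (maxn_idPl le); exact: leq_trans (leq_maxr _ _).
by have := f_max x; rewrite /f (maxn_idPr (ltnW lt)); exact: leq_trans (leq_maxl _ _).
Qed.

Lemma potent_sqzero_all (F : finFieldType) n (A : 'M[F]_n) :
  odd #|F| -> (5 <= #|F|)%N -> potent_sqzero A.
Proof.
move=> F_odd F_ge5; elim/ltn_ind: n A => -[|n] IH A; first exact: potent_sqzero_flat.
suff cyclic_step (B : 'M[F]_n.+1) v : v != 0 ->
    (forall x, krylov_dim B^T x <= krylov_dim B v)%N -> potent_sqzero B.
  have [v v0 [vmax|vmax]] := exists_max_krylov_dim A; first exact: cyclic_step vmax.
  by apply/potent_sqzero_tr/(cyclic_step _ v v0); rewrite trmxK.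
move=> v0 vmax; have [m [P [Q [B' [A' [PQ QP PB cB lt_m]]]]]] := cyclic_block_decomposition v0 vmax.
apply: potent_sqzero_sim PQ QP PB _; apply: potent_sqzero_block; last exact: IH.
exact: potent_sqzero_companion (krylov_dim_gt0 B v0) cB.
Qed.

Lemma expf_card_diagonalizable (F : finFieldType) n (D : 'M[F]_n) :
  D ^+ #|F| = D -> diagonalizable D.
Proof.
case: n D => [|n] D DD.
  by exists 1%:M; rewrite ?unitmx1 //; apply/is_diag_mxP => -[].
apply/diagonalizableP; exists (enum F); first exact: enum_uniq.
apply: mxminpoly_min.
by rewrite big_enum /= -finField_genPoly rmorphB rmorphXn /= horner_mx_X DD subrr.
Qed.

Theorem theorem2p2 (F : finFieldType) (n : nat)
  (Hodd : odd #|F|) (Hq : (5 <= #|F|)%N) (Hn : (1 <= n)%N) (A : 'M[F]_n) :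
  exists D M : 'M[F]_n,
    [/\ A = D + M, diagonalizable D, M *m M = 0 & D ^+ #|F| = D].
Proof.
have [D [M [AE MM DD]]] := potent_sqzero_all A Hodd Hq.
by exists D, M; split => //; exact: expf_card_diagonalizable.
Qed.
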